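(* Let $\mathcal{L}$ be a family of oriented balanced algebraic laws. Assume that for all $f,g$ in the positive geometry monoid $\mathcal{G}^+(\mathcal{L})$ there exist $f',g'\in\mathcal{G}^+(\mathcal{L})$ with $f\bullet g'=g\bullet f'$ and such that the domain of $f\bullet g'$ is the intersection of the domains of $f$ and $g$. Then the rewrite system $R^+_{\mathcal{L}}$ is confluent.
   Context: Terms over a signature $\Sigma$ and an infinite set of variables; addresses are finite sequences of positive integers, $t/\alpha$ the subterm at $\alpha$. A law is balanced if both sides contain the same variables. For an oriented law $L=(l,r)$ and an address $\alpha$, $O^+_{L,\alpha}$ is the partial map sending $t$ with $t/\alpha=l\sigma$ (for a substitution $\sigma$) to the term obtained by replacing that subterm by $r\sigma$. Operators act on the right and $f\bullet g$ means ''$f$ then $g$''. $\mathcal{G}^+(\mathcal{L})$ is the monoid of partial maps generated by all $O^+_{L,\alpha}$, $L\in\mathcal{L}$, $\alpha$ any address. $R^+_{\mathcal{L}}$ is the rewrite system with rules $l\to r$ for $(l,r)\in\mathcal{L}$ (applied to substitution instances in arbitrary subterms); writing $t\to^* t'$ when $t$ rewrites to $t'$ in finitely many (possibly zero) steps, $R^+_{\mathcal{L}}$ is confluent if whenever $t\to^*t'$ and $t\to^*t''$ there is $t'''$ with $t'\to^*t'''$ and $t''\to^*t'''$. *)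

From Stdlib Require Import List Relations.
Import ListNotations.
Set Implicit Arguments.

Section Terms.
Variables (F V : Type) (arity : F -> nat).

(** Raw terms; the terms over the signature are those satisfying [wf]. *)
Inductive term : Type :=
| Var : V -> term
| App : F -> list term -> term.

Inductive wf : term -> Prop :=
| wf_var x : wf (Var x)
| wf_app f ts : length ts = arity f -> Forall wf ts -> wf (App f ts).

Fixpoint vars (t : term) : list V :=
  match t with
  | Var x => [x]
  | App _ ts => flat_map vars ts
  end.

Fixpoint subst (s : V -> term) (t : term) : term :=
  match t with
  | Var x => s x
  | App f ts => App f (map (subst s) ts)
  end.

(** Addresses: lists of positive integers (index 1 = first argument). *)
Definition address := list nat.

Fixpoint subterm (t : term) (a : address) : option term :=
  match a with
  | [] => Some t
  | i :: a' =>
      match t with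
      | Var _ => None
      | App _ ts =>
          match i with
          | 0 => None
          | S j => match nth_error ts j with
                   | Some s => subterm s a'
                   | None => None
                   end
          end
      end
  end.

Fixpoint update_nth {A} (n : nat) (g : A -> A) (l : list A) : list A :=
  match l, n with
  | [], _ => []
  | x :: l', 0 => g x :: l'
  | x :: l', S n' => x :: update_nth n' g l'
  end.

Fixpoint replace (t : term) (a : address) (u : term) : term :=
  match a with
  | [] => u
  | i :: a' =>
      match t with
      | Var _ => t
      | App f ts => App f (update_nth (pred i) (fun s => replace s a' u) ts)
      end
  end.

Definition law := (term * term)%type.

Definition balanced (L : law) : Prop :=
  forall x, In x (vars (fst L)) <-> In x (vars (snd L)).

(** Partial maps on terms, represented by their (functional) graphs. *)
Definition pmap := term -> term -> Prop.

(** f • g : "f then g". *)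
Definition pcomp (f g : pmap) : pmap :=
  fun t t'' => exists t', f t t' /\ g t' t''.

Definition pdom (f : pmap) (t : term) : Prop := exists t', f t t'.

Definition peq (f g : pmap) : Prop := forall t t', f t t' <-> g t t'.

Definition pid : pmap := fun t t' => wf t /\ t' = t.

Definition Oplus (L : law) (a : address) : pmap :=
  fun t t' => wf t /\ exists s : V -> term,
      subterm t a = Some (subst s (fst L)) /\ t' = replace t a (subst s (snd L)).

Inductive inGplus (Ls : law -> Prop) : pmap -> Prop :=
| inG_id : inGplus Ls pid
| inG_cons L a g : Ls L -> inGplus Ls g -> inGplus Ls (pcomp (Oplus L a) g).

Definition rstep (Ls : law -> Prop) : term -> term -> Prop :=
  fun t t' => exists L a, Ls L /\ Oplus L a t t'.

Definition confluent (R : term -> term -> Prop) : Prop :=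
  forall t t1 t2, clos_refl_trans _ R t t1 -> clos_refl_trans _ R t t2 ->
    exists t3, clos_refl_trans _ R t1 t3 /\ clos_refl_trans _ R t2 t3.

End Terms.

(* Because the laws are balanced, the substitution matched by O^+_{L,α} determines
   its result, so every element of G^+(L) is a partial function; and a term
   over the signature rewrites to t' exactly when f t = t' for some f in
   G^+(L) (a term outside the signature admits no rewriting step at all).
   Given t ->* t1 = f t and t ->* t2 = g t, the hypothesis provides f', g'
   with t in the domain of f • g' = g • f'; by functionality its value t3 at t
   satisfies g' t1 = t3 = f' t2, a common reduct. *)
From Stdlib Require Import List Relations.
Import ListNotations.
Set Implicit Arguments.

Section Confluence.
Variables (F V : Type) (R : term F V -> term F V -> Prop) (G : pmap F V -> Prop).
Hypothesis G_functional : forall {f t u v}, G f -> f t u -> f t v -> u = v.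
Hypothesis G_sound : forall {f t u}, G f -> f t u -> clos_refl_trans _ R t u.
Hypothesis G_complete : forall t u, clos_refl_trans _ R t u ->
  t = u \/ exists f, G f /\ f t u.
Hypothesis G_closing : forall f g, G f -> G g ->
  exists f' g', G f' /\ G g' /\ peq (pcomp f g') (pcomp g f') /\
    forall t, pdom f t -> pdom g t -> pdom (pcomp f g') t.

Lemma confluent_of_closing : confluent R.
Proof.
  intros t t1 t2 R1 R2.
  destruct (G_complete R1) as [<- | [f [Gf Ft1]]].
  { exists t2; split; [exact R2 | apply rt_refl]. }
  destruct (G_complete R2) as [<- | [g [Gg Gt2]]].
  { exists t1; split; [apply rt_refl | exact R1]. }
  destruct (G_closing Gf Gg) as [f' [g' [Gf' [Gg' [Hcomm Hdom]]]]].
  destruct (Hdom t) as [t3 FG't3]; [exists t1; exact Ft1 | exists t2; exact Gt2 |].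
  pose proof (proj1 (Hcomm t t3) FG't3) as [v [Gv F'v]].
  destruct FG't3 as [u [Fu G'u]].
  rewrite (G_functional Gf Fu Ft1) in G'u.
  rewrite (G_functional Gg Gv Gt2) in F'v.
  exists t3; split; [exact (G_sound Gg' G'u) | exact (G_sound Gf' F'v)].
Qed.

End Confluence.

Section Terms.
Variables (F V : Type) (arity : F -> nat).
Implicit Types (t u : term F V) (ts : list (term F V)) (s : V -> term F V).

Definition term_nested_ind (P : term F V -> Prop)
  (HV : forall x, P (Var F x))
  (HA : forall f ts, Forall P ts -> P (App f ts)) : forall t, P t :=
  fix go t := match t with
  | Var _ x => HV x
  | App f ts => HA f ts ((fix go_list l : Forall P l := match l with
       | [] => Forall_nil P
       | u :: l' => Forall_cons u (go u) (go_list l') end) ts)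
  end.

Lemma wf_App_inv f ts : wf arity (App f ts) ->
  length ts = arity f /\ Forall (wf arity) ts.
Proof. intro H; inversion H; auto. Qed.

Lemma wf_subst_in t s x : wf arity (subst s t) -> In x (vars t) -> wf arity (s x).
Proof.
  revert s; induction t as [y|f ts IH] using term_nested_ind; simpl; intros s Hw Hx.
  - destruct Hx as [<-|[]]; exact Hw.
  - apply wf_App_inv in Hw as [_ Hw].
    apply in_flat_map in Hx as [u [Hu Hx]].
    rewrite Forall_forall in IH, Hw.
    apply (IH u Hu s); [apply Hw, in_map; exact Hu | exact Hx].
Qed.

Lemma wf_subst t s : wf arity t ->
  (forall x, In x (vars t) -> wf arity (s x)) -> wf arity (subst s t).
Proof.
  revert s; induction t as [y|f ts IH] using term_nested_ind; simpl; intros s Hw Hs.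
  - apply Hs; left; reflexivity.
  - apply wf_App_inv in Hw as [Hl Hw]. constructor.
    + rewrite length_map; exact Hl.
    + rewrite Forall_forall in *. intros v Hv. apply in_map_iff in Hv as [u [<- Hu]].
      apply IH; auto. intros x Hx; apply Hs, in_flat_map; eauto.
Qed.

Lemma subst_inj_in t s s' x : subst s t = subst s' t -> In x (vars t) -> s x = s' x.
Proof.
  revert s s'; induction t as [y|f ts IH] using term_nested_ind; simpl; intros s s' He Hx.
  - destruct Hx as [<-|[]]; exact He.
  - injection He as He. apply in_flat_map in Hx as [u [Hu Hx]].
    rewrite Forall_forall in IH. apply (IH u Hu); [|exact Hx].
    clear -He Hu. induction ts as [|w ts IHts]; simpl in *; [contradiction|].
    injection He as Ew Ets. destruct Hu as [<-|Hu]; auto.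
Qed.

Lemma subst_ext_in t s s' : (forall x, In x (vars t) -> s x = s' x) ->
  subst s t = subst s' t.
Proof.
  revert s s'; induction t as [y|f ts IH] using term_nested_ind; simpl; intros s s' He.
  - apply He; left; reflexivity.
  - f_equal. apply map_ext_in. intros u Hu. rewrite Forall_forall in IH.
    apply IH; [exact Hu|]. intros x Hx; apply He, in_flat_map; eauto.
Qed.

Lemma length_update_nth {A} n (g : A -> A) l : length (update_nth n g l) = length l.
Proof. revert n; induction l; destruct n; simpl; auto. Qed.

Lemma Forall_update_nth {A} (P : A -> Prop) n g l : Forall P l ->
  (forall x, nth_error l n = Some x -> P (g x)) -> Forall P (update_nth n g l).
Proof.
  revert n; induction l; intros n HF Hg; destruct n; simpl in *; auto;
  inversion HF; subst; constructor; auto.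
Qed.

Lemma wf_subterm a t v : wf arity t -> subterm t a = Some v -> wf arity v.
Proof.
  revert t; induction a as [|i a IH]; simpl; intros t Ht Hs.
  - injection Hs as <-; exact Ht.
  - destruct t as [x|f ts]; [discriminate|].
    destruct i as [|j]; [discriminate|].
    destruct (nth_error ts j) as [w|] eqn:E; [|discriminate].
    apply wf_App_inv in Ht as [_ Hw]. apply (IH w); [|exact Hs].
    rewrite Forall_forall in Hw. apply Hw. eapply nth_error_In; eauto.
Qed.

Lemma wf_replace a t v u : wf arity t -> subterm t a = Some v -> wf arity u ->
  wf arity (replace t a u).
Proof.
  revert t; induction a as [|i a IH]; simpl; intros t Ht Hs Hu; [exact Hu|].
  destruct t as [x|f ts]; [discriminate|].
  destruct i as [|j]; [discriminate|]. simpl.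
  destruct (nth_error ts j) as [w|] eqn:E; [|discriminate].
  apply wf_App_inv in Ht as [Hl Hw]. constructor.
  - rewrite length_update_nth; exact Hl.
  - apply Forall_update_nth; [exact Hw|]. intros x Ex. rewrite E in Ex. injection Ex as <-.
    apply (IH w); auto. rewrite Forall_forall in Hw. apply Hw. eapply nth_error_In; eauto.
Qed.

Lemma Oplus_wf L a t t' : wf arity (snd L) -> incl (vars (snd L)) (vars (fst L)) ->
  Oplus arity L a t t' -> wf arity t'.
Proof.
  intros Hr Hvars [Ht [s [Hs ->]]].
  apply wf_replace with (v := subst s (fst L)); [exact Ht | exact Hs |].
  apply wf_subst; [exact Hr|]. intros x Hx.
  apply wf_subst_in with (t := fst L); [|apply Hvars, Hx].
  exact (wf_subterm a Ht Hs).
Qed.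

Lemma Oplus_functional L a t u v : incl (vars (snd L)) (vars (fst L)) ->
  Oplus arity L a t u -> Oplus arity L a t v -> u = v.
Proof.
  intros Hvars [_ [s [Hs ->]]] [_ [s' [Hs' ->]]].
  rewrite Hs in Hs'. injection Hs' as Hs'. f_equal. apply subst_ext_in.
  intros x Hx; eapply subst_inj_in; [exact Hs' | apply Hvars, Hx].
Qed.

Lemma rstep_wf Ls t u : rstep arity Ls t u -> wf arity t.
Proof. intros [L [a [_ [Ht _]]]]; exact Ht. Qed.

Variable Ls : law F V -> Prop.
Hypothesis Ls_rhs_wf : forall L, Ls L -> wf arity (snd L).
Hypothesis Ls_rhs_vars : forall L, Ls L -> incl (vars (snd L)) (vars (fst L)).

Lemma inGplus_functional f t u v : inGplus arity Ls f -> f t u -> f t v -> u = v.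
Proof.
  intros Gf; revert t; induction Gf as [|L a g HL Gg IH]; intros t.
  - intros [_ ->] [_ ->]; reflexivity.
  - intros [w [Hw Gu]] [w' [Hw' Gv]].
    rewrite (Oplus_functional (Ls_rhs_vars HL) Hw Hw') in Gu. exact (IH _ Gu Gv).
Qed.

Lemma inGplus_rt f t u : inGplus arity Ls f -> f t u ->
  clos_refl_trans _ (rstep arity Ls) t u.
Proof.
  intros Gf; revert t; induction Gf as [|L a g HL Gg IH]; intros t.
  - intros [_ ->]; apply rt_refl.
  - intros [w [Hw Gu]]. apply rt_trans with w; [apply rt_step; exists L, a | apply IH]; auto.
Qed.

Lemma rt_inGplus t u : wf arity t -> clos_refl_trans _ (rstep arity Ls) t u ->
  exists f, inGplus arity Ls f /\ f t u.
Proof.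
  intros Ht Rtu; apply clos_rt_rt1n in Rtu; revert Ht.
  induction Rtu as [t|t w u [L [a [HL Hw]]] Rwu IH]; intros Ht.
  - exists (pid arity); split; [constructor | split; auto].
  - destruct IH as [g [Gg Gu]]; [exact (Oplus_wf (Ls_rhs_wf HL) (Ls_rhs_vars HL) Hw)|].
    exists (pcomp (Oplus arity L a) g); split; [constructor; auto | exists w; auto].
Qed.

Lemma rt_refl_or_inGplus t u : clos_refl_trans _ (rstep arity Ls) t u ->
  t = u \/ exists f, inGplus arity Ls f /\ f t u.
Proof.
  intros Rtu; destruct (clos_rt_rt1n _ _ _ _ Rtu) as [|? w Stw _]; [left; reflexivity|].
  right; exact (rt_inGplus (rstep_wf Stw) Rtu).
Qed.

End Terms.

Theorem proposition5p2 (F V : Type) (arity : F -> nat)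
  (V_infinite : forall l : list V, exists x, ~ In x l)
  (Ls : law F V -> Prop)
  (Ls_laws : forall L, Ls L ->
     wf arity (fst L) /\ wf arity (snd L) /\ balanced L)
  (H : forall f g, inGplus arity Ls f -> inGplus arity Ls g ->
     exists f' g', inGplus arity Ls f' /\ inGplus arity Ls g' /\
       peq (pcomp f g') (pcomp g f') /\
       (forall t, pdom (pcomp f g') t <-> (pdom f t /\ pdom g t))) :
  confluent (rstep arity Ls).
Proof.
  assert (Ls_rhs_wf : forall L, Ls L -> wf arity (snd L))
    by (intros L HL; apply Ls_laws, HL).
  assert (Ls_rhs_vars : forall L, Ls L -> incl (vars (snd L)) (vars (fst L)))
    by (intros L HL x; apply (Ls_laws L HL)).
  apply confluent_of_closing with (G := inGplus arity Ls).
  - intros f t u v; apply inGplus_functional, Ls_rhs_vars.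
  - intros f t u; apply inGplus_rt.
  - apply rt_refl_or_inGplus; assumption.
  - intros f g Gf Gg.
    destruct (H f g Gf Gg) as [f' [g' [Gf' [Gg' [Hcomm Hdom]]]]].
    exists f', g'; split; [exact Gf' | split; [exact Gg' | split; [exact Hcomm |]]].
    intros t Df Dg; apply Hdom; split; assumption.
Qed.
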